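(* Let $\mathcal{S}=(S,\boldsymbol{\tau})$ be a species tree on $X=\{x_1,\ldots,x_n\}$ with height $\eta=\tau_0+\cdots+\tau_{n-2}$, let $h$ be a gene tree history evolving within $\mathcal{S}$ (with given coalescent times), and let $0<\eta'\le\eta$. Let $h^{\mathit{top}}_{\mathit{ext}}$ be the extended top part of $h$ concerning cut height $\eta'$ and let $h^1,\ldots,h^k$ be the chopped parts of $h$ concerning cut height $\eta'$. Then for each $x_i\in X$, $$FP_h(x_i) = FP_{h^i}(x_i) + FP_{h^{\mathit{top}}_{\mathit{ext}}}(v_{x_i}),$$ where $h^i$ is the chopped part containing $x_i$ (whose root may have out-degree $1$) and $v_{x_i}$ is any one of the newly attached leaves of $h^{\mathit{top}}_{\mathit{ext}}$ whose parent is an ancestor of $x_i$ in $h$.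
   Context: A species tree $\mathcal{S}=(S,\boldsymbol{\tau})$ on $X$ is a rooted binary phylogenetic tree $S$ with leaf set $X$ and positive interval lengths $\tau_0,\dots,\tau_{n-2}$ between successive speciation events ($\tau_0$ from the leaves at time $0$ to the first speciation), so it is ultrametric with height $\eta=\tau_0+\cdots+\tau_{n-2}$. A gene tree history $h$ evolving within $\mathcal{S}$ is an ultrametric rooted binary tree with leaf set $X$ (leaves at time $0$) whose internal vertices are coalescent events placed at specific times within populations (branches) of $\mathcal{S}$ or above its root; its edge lengths are given by these times, and its root lies above height $\eta$. Cutting $h$ at height $\eta'$: every edge of $h$ present at time $\eta'$ is subdivided into two edges at that time, disconnecting $h$; if an internal vertex $v$ of $h$ lies exactly at time $\eta'$, it is split into two copies, one being the root of the subtree with the outgoing (descendant) edges and the other a new leaf on the incoming edge. This yields a forest; the tree containing the root of $h$ is the top part $h^{\mathit{top}}$, and the other trees $h^1,\dots,h^k$ are the chopped parts. The extended top part $h^{\mathit{top}}_{\mathit{ext}}$ is obtained from $h^{\mathit{top}}$ by attaching to each leaf $\ell$ of $h^{\mathit{top}}$, via edges of length $0$, as many new leaves as $\ell$ had descendant leaves in $h$ (the result may be non-binary and contain degree-2 vertices). For a rooted tree $T$ with root $\rho$ and nonnegative edge lengths $l(e)$, the Fair Proportion index is $FP_T(x)=\sum_{e\in P(T;\rho,x)} l(e)/n(e)$, where $P(T;\rho,x)$ is the path from $\rho$ to leaf $x$ and $n(e)$ is the number of leaves of $T$ descending from $e$. *)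

From mathcomp Require Import all_boot all_order all_algebra.
Set Implicit Arguments. Unset Strict Implicit. Unset Printing Implicit Defensive.
Import Order.TTheory GRing.Theory Num.Theory.
Local Open Scope ring_scope.

(* A rooted binary tree whose internal vertices (speciation events) carry their
   rank k in 1..n-1 (the k-th speciation event going back in time). *)
Inductive stree (L : Type) := SLeaf of L | SNode of nat & stree L & stree L.
Arguments SLeaf {L}. Arguments SNode {L}.

Fixpoint sleaves (L : Type) (S : stree L) : seq L :=
  match S with SLeaf x => [:: x] | SNode _ l r => sleaves l ++ sleaves r end.

Fixpoint sranks (L : Type) (S : stree L) : seq nat :=
  match S with SLeaf _ => [::] | SNode k l r => k :: sranks l ++ sranks r end.

Fixpoint sranked (L : Type) (S : stree L) : bool :=
  match S with
  | SLeaf _ => true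
  | SNode k l r => all (fun j => (j < k)%N) (sranks l ++ sranks r)
                   && sranked l && sranked r
  end.

Fixpoint sexists (L : Type) (P : stree L -> Prop) (S : stree L) : Prop :=
  P S \/ match S with SLeaf _ => False | SNode _ l r => sexists P l \/ sexists P r end.

(* time (height) of the root of a subtree of the species tree, given the
   interval lengths tau_0, ..., tau_(n-2) *)
Definition stime (R : realFieldType) (n : nat) (tau : 'I_n.-1 -> R)
  (L : Type) (S : stree L) : R :=
  match S with
  | SLeaf _ => 0
  | SNode k _ _ => \sum_(i < n.-1 | (i < k)%N) tau i
  end.

Definition sheight (R : realFieldType) (n : nat) (tau : 'I_n.-1 -> R) : R :=
  \sum_(i < n.-1) tau i.

Definition species_tree (R : realFieldType) (n : nat)
  (S : stree 'I_n) (tau : 'I_n.-1 -> R) : Prop :=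
  [/\ perm_eq (sleaves S) (enum 'I_n),
      perm_eq (sranks S) (iota 1 n.-1),
      sranked S &
      forall i, 0 < tau i].

Inductive gtree (R L : Type) := GLeaf of L | GNode of R & gtree R L & gtree R L.
Arguments GLeaf {R L}. Arguments GNode {R L}.

Definition gtime (R : realFieldType) (L : Type) (h : gtree R L) : R :=
  match h with GLeaf _ => 0 | GNode t _ _ => t end.

Fixpoint gleaves (R L : Type) (h : gtree R L) : seq L :=
  match h with GLeaf x => [:: x] | GNode _ l r => gleaves l ++ gleaves r end.

Fixpoint gforall (R L : Type) (P : gtree R L -> Prop) (h : gtree R L) : Prop :=
  P h /\ match h with GLeaf _ => True | GNode _ l r => gforall P l /\ gforall P r end.

(* h is a gene tree history evolving within the species tree (S, tau):
   leaf set X (each leaf once, at time 0), coalescent times strictly increase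
   towards the root, every coalescent event lies in a population of S (or above
   its root) containing all lineages it merges, i.e. at a time no earlier than
   the speciation event at the root of some clade of S containing all leaves
   below it; and the root of h lies above the height eta of S. *)
Definition gene_tree_history (R : realFieldType) (n : nat)
  (S : stree 'I_n) (tau : 'I_n.-1 -> R) (h : gtree R 'I_n) : Prop :=
  [/\ perm_eq (gleaves h) (enum 'I_n),
      gforall (fun v => match v with
                        | GLeaf _ => True
                        | GNode t l r =>
                            [/\ gtime l < t, gtime r < t &
                                sexists (fun w => {subset gleaves v <= sleaves w}
                                                  /\ stime tau w <= t) S]
                        end) h &
      sheight tau < gtime h].

Inductive wtree (R L : Type) := WLeaf of L | WNode of seq (R * wtree R L).
Arguments WLeaf {R L}. Arguments WNode {R L}.

Fixpoint wleaves (R L : Type) (T : wtree R L) : seq L :=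
  match T with
  | WLeaf x => [:: x]
  | WNode cs => (fix go (cs : seq (R * wtree R L)) : seq L :=
                   match cs with
                   | [::] => [::]
                   | (_, c) :: cs' => wleaves c ++ go cs'
                   end) cs
  end.

Fixpoint FP (R : realFieldType) (L : eqType) (T : wtree R L) (x : L) : R :=
  match T with
  | WLeaf _ => 0
  | WNode cs => (fix go (cs : seq (R * wtree R L)) : R :=
                   match cs with
                   | [::] => 0
                   | (l, c) :: cs' =>
                       (if x \in wleaves c
                        then l / (size (wleaves c))%:R + FP c x
                        else 0) + go cs'
                   end) cs
  end.

Fixpoint gtree_w (R : realFieldType) (L : Type) (h : gtree R L) : wtree R L :=
  match h with
  | GLeaf x => WLeaf x
  | GNode t l r => WNode [:: (t - gtime l, gtree_w l); (t - gtime r, gtree_w r)]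
  end.

(* A subtree whose root lies at time <= c becomes a leaf of the top part (at
   time c), to which are attached, by edges of length 0, one new leaf for each
   leaf of h below it (the new leaves are named after these descendant leaves).
   Edges of the top part going down to such a leaf have length (t - c). *)
Fixpoint top_ext (R : realFieldType) (L : Type) (c : R) (h : gtree R L)
  : wtree R L :=
  match h with
  | GLeaf y => WNode [:: (0, WLeaf y)]
  | GNode t l r =>
      if t <= c then WNode [seq (0, WLeaf y) | y <- gleaves h]
      else WNode [:: (t - Num.max (gtime l) c, top_ext c l);
                     (t - Num.max (gtime r) c, top_ext c r)]
  end.

(* Chopped parts of h concerning cut height c: for a maximal subtree rooted
   strictly below c, the edge above it is subdivided at time c, giving a
   chopped part whose root (at c) has out-degree 1; a vertex exactly at time c
   is split and its descendant copy is the root of the chopped part. *)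
Fixpoint chopped (R : realFieldType) (L : Type) (c : R) (h : gtree R L)
  : seq (wtree R L) :=
  match h with
  | GLeaf y => [:: WNode [:: (c, WLeaf y)]]
  | GNode t l r =>
      if t < c then [:: WNode [:: (c - t, gtree_w h)]]
      else if t == c then [:: gtree_w h]
      else chopped c l ++ chopped c r
  end.

Definition is_chopped_part (R : realFieldType) (L : Type) (c : R)
  (h : gtree R L) (P : wtree R L) : Prop :=
  exists2 i, (i < size (chopped c h))%N & nth (WNode [::]) (chopped c h) i = P.

From mathcomp Require Import all_boot all_order all_algebra.
From mathcomp Require Import ring.
From Stdlib Require List.
Import Order.TTheory GRing.Theory Num.Theory.
Local Open Scope ring_scope.

(* Since the cut lies strictly above the leaves, the path from the root of h
   to a leaf x crosses it exactly once: at a vertex lying on the cut, or inside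
   an edge e, which the cut splits into an upper piece (in the top part) and a
   lower piece (the stem of the chopped part containing x).  Both pieces, like
   every edge of the top part, have as many descendant leaves as in h, because
   the extended top part reattaches below each cut lineage one leaf per leaf of
   h it carries; hence the terms l(e)/n(e) add up.  The new edges have length
   0, so the top-part term is the same for every leaf y of the chopped part. *)

Section CutFairProportion.
Variables (R : realFieldType) (L : eqType).
Implicit Types (g l r : gtree R L) (c t : R) (x y : L) (T P : wtree R L)
  (cs : seq (R * wtree R L)).

Lemma wleaves_WNode cs :
  wleaves (WNode cs) = flatten [seq wleaves e.2 | e <- cs].
Proof. by elim: cs => [|[a T] cs /= ->]. Qed.

Lemma FP_WNode cs x :
  FP (WNode cs) x = \sum_(e <- cs)
    (if x \in wleaves e.2 then e.1 / (size (wleaves e.2))%:R + FP e.2 x else 0).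
Proof. by elim: cs => [|[a T] cs /= ->]; rewrite ?big_nil ?big_cons. Qed.

Lemma FP_WNode2 a b T T' x :
  FP (WNode [:: (a, T); (b, T')]) x =
    (if x \in wleaves T then a / (size (wleaves T))%:R + FP T x else 0)
  + (if x \in wleaves T' then b / (size (wleaves T'))%:R + FP T' x else 0).
Proof. by rewrite FP_WNode !big_cons big_nil addr0. Qed.

Lemma FP_star s x : FP (WNode [seq (0, @WLeaf R L z) | z <- s]) x = 0.
Proof.
by rewrite FP_WNode big_map big1 // => z _; rewrite mul0r add0r; case: ifP.
Qed.

Lemma wleaves_gtree_w g : wleaves (gtree_w g) = gleaves g.
Proof. by elim: g => [z|t l IHl r IHr] //=; rewrite IHl IHr cats0. Qed.

Lemma wleaves_top_ext c g : wleaves (top_ext c g) = gleaves g.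
Proof.
elim: g => [z|t l IHl r IHr] //=.
case: ifP => _; last by rewrite /= IHl IHr cats0.
by rewrite wleaves_WNode -map_comp /= flatten_seq1.
Qed.

Lemma FP_top_ext_below c g y : gtime g <= c -> FP (top_ext c g) y = 0.
Proof.
case: g => [z|t l r] /= lec; last by rewrite lec FP_star.
exact: (FP_star [:: z]).
Qed.

Lemma chopped_leaves {c g P} :
  List.In P (chopped c g) -> {subset wleaves P <= gleaves g}.
Proof.
elim: g P => [z|t l IHl r IHr] P /=; first by case=> // <-.
case: ifP => _; first by case=> // <-; rewrite /= !wleaves_gtree_w ?cats0.
case: ifP => _; first by case=> // <-; rewrite /= !wleaves_gtree_w ?cats0.
move=> /List.in_app_iff [inPl | inPr] z zP; rewrite mem_cat.
  by rewrite (IHl _ inPl z zP).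
by rewrite (IHr _ inPr z zP) orbT.
Qed.

(* A subtree rooted at or below the cut is a whole chopped part, whose stem has
   length c - gtime g (an empty stem when its root is exactly at the cut). *)
Lemma FP_chopped_below c g P x : 0 < c -> gtime g <= c ->
  List.In P (chopped c g) -> x \in wleaves P ->
  FP P x = (c - gtime g) / (size (gleaves g))%:R + FP (gtree_w g) x.
Proof.
move=> c_gt0; rewrite le_eqVlt => /orP [/eqP gc | gc].
  have -> : chopped c g = [:: gtree_w g].
    case: g gc => [z /= z_c | t l r /= ->]; last by rewrite ltxx eqxx.
    by rewrite -z_c ltxx in c_gt0.
  by move=> -[<- _|//]; rewrite gc subrr mul0r add0r.
have stem : chopped c g = [:: WNode [:: (c - gtime g, gtree_w g)]].
  by case: g gc => [z _ | t l r /= ->]; rewrite /= ?subr0.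
rewrite stem => -[<- |//].
by rewrite FP_WNode big_seq1 /= ?cats0 wleaves_gtree_w => ->.
Qed.

Lemma FP_edge_split c t g P x y : 0 < c -> c < t ->
  List.In P (chopped c g) -> x \in wleaves P -> y \in wleaves P ->
  (c < gtime g -> FP (gtree_w g) x = FP P x + FP (top_ext c g) y) ->
  (t - gtime g) / (size (gleaves g))%:R + FP (gtree_w g) x =
  FP P x + ((t - Num.max (gtime g) c) / (size (gleaves g))%:R
            + FP (top_ext c g) y).
Proof.
move=> c_gt0 ct inP xP yP IH; have [cg | gc] := ltP c (gtime g).
  by rewrite (IH cg); ring.
by rewrite FP_top_ext_below // (FP_chopped_below c g P x c_gt0 gc inP xP); ring.
Qed.

Lemma FP_gtree_w_node t l r x :
  FP (gtree_w (GNode t l r)) x =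
    (if x \in gleaves l
     then (t - gtime l) / (size (gleaves l))%:R + FP (gtree_w l) x else 0)
  + (if x \in gleaves r
     then (t - gtime r) / (size (gleaves r))%:R + FP (gtree_w r) x else 0).
Proof. by rewrite [gtree_w _]/= FP_WNode2 !wleaves_gtree_w. Qed.

Lemma FP_top_ext_above c t l r y : c < t ->
  FP (top_ext c (GNode t l r)) y =
    (if y \in gleaves l then (t - Num.max (gtime l) c) / (size (gleaves l))%:R
                             + FP (top_ext c l) y else 0)
  + (if y \in gleaves r then (t - Num.max (gtime r) c) / (size (gleaves r))%:R
                             + FP (top_ext c r) y else 0).
Proof.
by move=> ct; rewrite [top_ext _ _]/= (lt_geF ct) FP_WNode2 !wleaves_top_ext.
Qed.

Lemma chopped_above c t l r : c < t ->
  chopped c (GNode t l r) = chopped c l ++ chopped c r.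
Proof. by move=> ct; rewrite /= (lt_gtF ct) (gt_eqF ct). Qed.

Lemma FP_cut c g : 0 < c -> uniq (gleaves g) -> c < gtime g ->
  forall P, List.In P (chopped c g) ->
  forall x y, x \in wleaves P -> y \in wleaves P ->
  FP (gtree_w g) x = FP P x + FP (top_ext c g) y.
Proof.
move=> c_gt0; elim: g => [z _ /= zc | t l IHl r IHr].
  by rewrite ltNge (ltW c_gt0) in zc.
rewrite [gleaves _]/= cat_uniq => /and3P [ul dis ur] ct.
have {}ct : c < t := ct.
have disj z : z \in gleaves l -> z \notin gleaves r.
  by apply: contraL => zr; apply: (hasPn dis).
rewrite chopped_above // => P /List.in_app_iff [inP | inP] x y xP yP.
all: rewrite FP_gtree_w_node FP_top_ext_above //.
- have [xl yl] := (chopped_leaves inP x xP, chopped_leaves inP y yP).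
  rewrite xl yl (negbTE (disj x xl)) (negbTE (disj y yl)) !addr0.
  by apply: FP_edge_split => // cl; apply: IHl.
- have [xr yr] := (chopped_leaves inP x xP, chopped_leaves inP y yP).
  rewrite xr yr (negbTE (hasPn dis x xr)) (negbTE (hasPn dis y yr)) !add0r.
  by apply: FP_edge_split => // cr; apply: IHr.
Qed.

End CutFairProportion.

Lemma In_nth (T : Type) (d : T) s i : (i < size s)%N -> List.In (nth d s i) s.
Proof. by elim: s i => [|a s IH] [|i] //= lti; [left | right; apply: IH]. Qed.

Theorem lemma1 (R : realFieldType) (n : nat) (S : stree 'I_n)
  (tau : 'I_n.-1 -> R) (h : gtree R 'I_n) (eta' : R) :
  species_tree S tau ->
  gene_tree_history S tau h ->
  0 < eta' -> eta' <= sheight tau ->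
  forall P : wtree R 'I_n, is_chopped_part eta' h P ->
  forall x y : 'I_n, x \in wleaves P -> y \in wleaves P ->
  FP (gtree_w h) x = FP P x + FP (top_ext eta' h) y.
Proof.
move=> _ [leaves_h _ root_above] eta'_gt0 eta'_le P [i lti <-] x y xP yP.
apply: FP_cut => //; last exact: In_nth.
- by rewrite (perm_uniq leaves_h) enum_uniq.
- exact: le_lt_trans root_above.
Qed.
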